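(* Let $\kappa=\lambda^+$ with $\lambda$ a regular cardinal, and let $T$ be a tree of height $\kappa$ and size $\kappa$ which has at most $\kappa$ cofinal branches and in which every node has $\kappa$ many successors. Let $\langle b_\alpha:\alpha<\kappa\rangle$ be an enumeration of the cofinal branches of $T$, for each $\alpha<\kappa$ let $s_\alpha$ be the $\leq_T$-least element of $b_\alpha\setminus\bigcup_{\beta<\alpha}b_\beta$, and let $T^\star=\{t\in T:\neg\exists\alpha\,(s_\alpha<_T t\in b_\alpha)\}$. Assume there is a function $F:T^\star\to\lambda$ such that whenever $x\neq y$ are in $T^\star$ and $F(x)=F(y)$, then $x$ and $y$ are $\leq_T$-incomparable. Then there is $F':T\to\lambda$ with $F'\supseteq F$ such that $F'$ specializes $T$.
   Context: A function $F':T\to\lambda$ specializes $T$ (and $T$ is then called special) if for all $x,y,z\in T$, if $x\leq_T y$, $x\leq_T z$ and $F'(x)=F'(y)=F'(z)$, then $y\leq_T z$ or $z\leq_T y$. *)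

From Stdlib Require Import Relations Wellfounded.

Definition card_le {X Y : Type} (A : X -> Prop) (B : Y -> Prop) : Prop :=
  exists f : X -> Y, (forall x, A x -> B (f x)) /\
    (forall x y, A x -> A y -> f x = f y -> x = y).

Definition equipotent {X Y : Type} (A : X -> Prop) (B : Y -> Prop) : Prop :=
  exists f : X -> Y, (forall x, A x -> B (f x)) /\
    (forall x y, A x -> A y -> f x = f y -> x = y) /\
    (forall y, B y -> exists x, A x /\ f x = y).

Definition setT_ (X : Type) : X -> Prop := fun _ => True.

Definition strict_wellorder {X : Type} (lt : X -> X -> Prop) : Prop :=
  (forall x, ~ lt x x) /\
  (forall x y z, lt x y -> lt y z -> lt x z) /\
  (forall x y, lt x y \/ x = y \/ lt y x) /\
  well_founded lt.

Definition initial_seg {X : Type} (lt : X -> X -> Prop) (a : X) : X -> Prop :=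
  fun x => lt x a.

(* (X, lt) is (the von Neumann ordinal of) an infinite cardinal:
   a well-order that is infinite and has no initial segment of the same size. *)
Definition is_infinite_cardinal {X : Type} (lt : X -> X -> Prop) : Prop :=
  strict_wellorder lt /\
  card_le (setT_ nat) (setT_ X) /\
  (forall a, ~ card_le (setT_ X) (initial_seg lt a)).

(* the infinite cardinal (X, lt) is regular: cf = itself, i.e. every
   cofinal (unbounded) subset has full cardinality *)
Definition is_regular_cardinal {X : Type} (lt : X -> X -> Prop) : Prop :=
  is_infinite_cardinal lt /\
  forall A : X -> Prop, (forall x, exists y, A y /\ ~ lt y x) ->
    card_le (setT_ X) A.

(* (K, ltK) is the successor cardinal of the cardinal with carrier L:
   the least ordinal not injecting into L. *)
Definition is_successor_cardinal_of {K L : Type} (ltK : K -> K -> Prop) : Prop :=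
  strict_wellorder ltK /\
  (forall a, card_le (initial_seg ltK a) (setT_ L)) /\
  ~ card_le (setT_ K) (setT_ L).

Section Trees.
Context {T : Type} (leT : T -> T -> Prop).

Definition ltT (x y : T) : Prop := leT x y /\ x <> y.

Definition is_tree : Prop :=
  (forall x, leT x x) /\
  (forall x y, leT x y -> leT y x -> x = y) /\
  (forall x y z, leT x y -> leT y z -> leT x z) /\
  (forall t x y, ltT x t -> ltT y t -> leT x y \/ leT y x) /\
  well_founded ltT.

(* ht t is the height of t: the order type of the predecessors of t,
   given as an ordinal below the well-ordered type (K, ltK) *)
Definition is_height_fun {K : Type} (ltK : K -> K -> Prop) (ht : T -> K) : Prop :=
  forall t, exists f : T -> K,
    (forall x, ltT x t -> ltK (f x) (ht t)) /\
    (forall b, ltK b (ht t) -> exists x, ltT x t /\ f x = b) /\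
    (forall x y, ltT x t -> ltT y t -> (ltT x y <-> ltK (f x) (f y))).

Definition imm_succ (t : T) : T -> Prop :=
  fun u => ltT t u /\ forall v, ltT t v -> ltT v u -> False.

Definition cofinal_branch {K : Type} (ht : T -> K) (B : T -> Prop) : Prop :=
  (forall x y, B x -> B y -> leT x y \/ leT y x) /\
  (forall x y, B y -> leT x y -> B x) /\
  (forall a : K, exists t, B t /\ ht t = a).

Definition specializes {L : Type} (F' : T -> L) : Prop :=
  forall x y z, leT x y -> leT x z -> F' x = F' y -> F' x = F' z ->
    leT y z \/ leT z y.

End Trees.

Definition is_s {T K : Type} (leT : T -> T -> Prop) (ltK : K -> K -> Prop)
  (D : K -> Prop) (b : K -> T -> Prop) (a : K) (s : T) : Prop :=
  let S := fun u => b a u /\ ~ (exists c, D c /\ ltK c a /\ b c u) in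
  S s /\ forall u, S u -> leT s u.

Definition Tstar {T K : Type} (leT : T -> T -> Prop) (ltK : K -> K -> Prop)
  (D : K -> Prop) (b : K -> T -> Prop) (t : T) : Prop :=
  ~ exists a s, D a /\ is_s leT ltK D b a s /\ ltT leT s t /\ b a t.

(** Send every node [t] outside [T^star] to the node [s_a] with [s_a <_T t ∈ b_a]
    (and every node of [T^star] to itself), and put [F' t := F (root t)].
    Since [root t <=_T t] and [F] separates comparable nodes of [T^star], two nodes
    above [x] with the colour of [x] both have the root [u := root x]; each of them
    is then either [u] itself or lies on the branch [b_a] with [s_a = u].  As [s_a]
    determines [a], they lie on one branch, hence are comparable. *)

From Stdlib Require Import Classical ClassicalEpsilon.

Lemma is_tree_le_comparable {T : Type} (leT : T -> T -> Prop) (u v y : T) :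
  is_tree leT -> leT u y -> leT v y -> leT u v \/ leT v u.
Proof.
  intros [_ [_ [_ [Hlin _]]]] Huy Hvy.
  destruct (classic (u = y)) as [->|Hu]; [now right|].
  destruct (classic (v = y)) as [->|Hv]; [now left|].
  now apply (Hlin y).
Qed.

Section StarRoot.

Variables (T K : Type) (leT : T -> T -> Prop) (ltK : K -> K -> Prop).
Variables (D : K -> Prop) (b : K -> T -> Prop).

Hypothesis Htree : is_tree leT.
Hypothesis ltK_total : forall a c, ltK a c \/ a = c \/ ltK c a.
Hypothesis b_chain : forall a x y, D a -> b a x -> b a y -> leT x y \/ leT y x.
Hypothesis b_down : forall a x y, D a -> b a y -> leT x y -> b a x.

Local Notation star := (Tstar leT ltK D b).
Local Notation s_of a s := (D a /\ is_s leT ltK D b a s).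

Lemma is_s_index_unique (a c : K) (s : T) : s_of a s -> s_of c s -> a = c.
Proof.
  intros [Da [[Sa Sna] _]] [Dc [[Sc Snc] _]].
  destruct (ltK_total a c) as [Hac|[Hac|Hca]]; [|exact Hac|].
  - exfalso. apply Snc. now exists a.
  - exfalso. apply Sna. now exists c.
Qed.

Lemma is_s_Tstar (a : K) (s : T) : s_of a s -> star s.
Proof.
  intros [Da [[Sa Sna] Smin]] [c [s' [Dc [[[Sc Snc] _] [[Hs's Hne] Hcs]]]]].
  destruct (ltK_total c a) as [Hca|[<-|Hac]].
  - apply Sna. now exists c.
  - apply Hne. destruct Htree as [_ [Hanti _]].
    apply Hanti; [exact Hs's|]. now apply Smin.
  - apply Snc. exists a. repeat split; try assumption.
    exact (b_down a s' s Da Sa Hs's).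
Qed.

Definition star_root (t : T) : T :=
  if excluded_middle_informative (star t) then t
  else epsilon (inhabits t)
         (fun s => exists a, s_of a s /\ ltT leT s t /\ b a t).

Lemma star_root_spec (t : T) :
  (star t /\ star_root t = t) \/
  exists a, s_of a (star_root t) /\ ltT leT (star_root t) t /\ b a t.
Proof.
  unfold star_root.
  destruct (excluded_middle_informative (star t)) as [Ht|Ht]; [now left|right].
  apply epsilon_spec.
  apply NNPP. intro Hno. apply Ht. intros [a [s [Da [Hs [Hst Hat]]]]].
  apply Hno. exists s, a. auto.
Qed.

Lemma star_root_id (t : T) : star t -> star_root t = t.
Proof.
  intro Ht. unfold star_root.
  now destruct (excluded_middle_informative (star t)).
Qed.

Lemma star_root_Tstar (t : T) : star (star_root t).
Proof.
  destruct (star_root_spec t) as [[Ht ->]|[a [Ha _]]]; [exact Ht|].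
  exact (is_s_Tstar a _ Ha).
Qed.

Lemma star_root_le (t : T) : leT (star_root t) t.
Proof.
  destruct (star_root_spec t) as [[_ ->]|[a [_ [[Hle _] _]]]]; [|exact Hle].
  destruct Htree as [Hrefl _]. apply Hrefl.
Qed.

Variables (L : Type) (F : T -> L).
Hypothesis F_antichains : forall x y, star x -> star y -> x <> y ->
  F x = F y -> ~ leT x y /\ ~ leT y x.

Lemma star_root_eq_of_color (u y : T) :
  star u -> leT u y -> F (star_root y) = F u -> star_root y = u.
Proof.
  intros Hu Huy HF. apply NNPP. intro Hne.
  destruct (F_antichains _ _ (star_root_Tstar y) Hu Hne HF) as [H1 H2].
  destruct (is_tree_le_comparable leT _ _ y Htree (star_root_le y) Huy); tauto.
Qed.

Lemma star_root_above_cases (u y : T) :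
  star_root y = u -> y = u \/ exists a, s_of a u /\ b a y.
Proof.
  intros <-. destruct (star_root_spec y) as [[_ E]|[a [Ha [_ Hay]]]].
  - now left.
  - right. now exists a.
Qed.

Lemma specializes_star_root : specializes leT (fun t => F (star_root t)).
Proof.
  intros x y z Hxy Hxz HFy HFz.
  destruct Htree as [_ [_ [Htrans _]]].
  set (u := star_root x) in *.
  assert (Hu : star u) by apply star_root_Tstar.
  assert (Huy : leT u y) by (apply Htrans with x; [apply star_root_le|exact Hxy]).
  assert (Huz : leT u z) by (apply Htrans with x; [apply star_root_le|exact Hxz]).
  destruct (star_root_above_cases u y (star_root_eq_of_color u y Hu Huy (eq_sym HFy)))
    as [->|[a [Ha Hay]]]; [now left|].
  destruct (star_root_above_cases u z (star_root_eq_of_color u z Hu Huz (eq_sym HFz)))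
    as [->|[c [Hc Hcz]]]; [now right|].
  rewrite <- (is_s_index_unique a c u Ha Hc) in Hcz.
  exact (b_chain a y z (proj1 Ha) Hay Hcz).
Qed.

End StarRoot.

Theorem lemma4p3
  (L : Type) (ltL : L -> L -> Prop) (K : Type) (ltK : K -> K -> Prop)
  (HL : is_regular_cardinal ltL)
  (HK : @is_successor_cardinal_of K L ltK)
  (T : Type) (leT : T -> T -> Prop) (Htree : is_tree leT)
  (ht : T -> K) (Hht : is_height_fun leT ltK ht)
  (Hheight : forall a : K, exists t, ht t = a)
  (Hsize : equipotent (setT_ T) (setT_ K))
  (Hsucc : forall t, equipotent (imm_succ leT t) (setT_ K))
  (D : K -> Prop) (HD : forall a c, D a -> ltK c a -> D c)
  (b : K -> T -> Prop)
  (Hb_branch : forall a, D a -> cofinal_branch leT ht (b a))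
  (Hb_inj : forall a c, D a -> D c -> (forall t, b a t <-> b c t) -> a = c)
  (Hb_onto : forall B, cofinal_branch leT ht B ->
     exists a, D a /\ forall t, B t <-> b a t)
  (F : T -> L)
  (HF : forall x y, Tstar leT ltK D b x -> Tstar leT ltK D b y -> x <> y ->
     F x = F y -> ~ leT x y /\ ~ leT y x) :
  exists F' : T -> L,
    (forall t, Tstar leT ltK D b t -> F' t = F t) /\ specializes leT F'.
Proof.
  destruct HK as [[_ [_ [ltK_total _]]] _].
  assert (b_chain : forall a x y, D a -> b a x -> b a y -> leT x y \/ leT y x)
    by (intros a x y Da; apply (Hb_branch a Da)).
  assert (b_down : forall a x y, D a -> b a y -> leT x y -> b a x)
    by (intros a x y Da; apply (Hb_branch a Da)).
  exists (fun t => F (star_root T K leT ltK D b t)). split.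
  - intros t Ht. now rewrite star_root_id.
  - exact (specializes_star_root T K leT ltK D b Htree ltK_total b_chain b_down
             L F HF).
Qed.
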